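(* Let $W_2\in\{M_2,S_2\}$ and let $\phi:W_2\to W_2$ be a linear map with $\sigma_{\mathcal{K}}(\phi(A))=\sigma_{\mathcal{K}}(A)$ for all $A\in W_2$. Then $\phi(E_{12}+E_{21})=E_{12}+E_{21}$ or $\phi(E_{12}+E_{21})=-(E_{12}+E_{21})$.
   Context: $M_2$: real $2\times2$ matrices; $S_2$: symmetric ones; $E_{ij}$ is the matrix with $1$ in position $(i,j)$ and $0$ elsewhere. Lorentz cone $\mathcal{K}=\{(x_1,x_2)^T:|x_1|\le x_2\}$; a real $\lambda$ is an L-eigenvalue of $A$ if there is a nonzero $x\in\mathcal{K}$ with $(A-\lambda I)x\in\mathcal{K}$ and $x^T(A-\lambda I)x=0$; $\sigma_{\mathcal{K}}(A)$ is the set of L-eigenvalues. *)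

From HB Require Import structures.
From mathcomp Require Import all_boot all_order all_algebra.
From mathcomp Require Import reals.
Set Implicit Arguments. Unset Strict Implicit. Unset Printing Implicit Defensive.
Import Order.TTheory GRing.Theory Num.Theory.
Local Open Scope ring_scope.

(* indices 1 and 2 of the paper are ord0 and ord_max in 'I_2 *)
Definition i1 : 'I_2 := ord0.
Definition i2 : 'I_2 := ord_max.

Definition E (R : realType) (i j : 'I_2) : 'M[R]_2 := delta_mx i j.

Definition inK (R : realType) (x : 'cV[R]_2) : Prop := `|x i1 0| <= x i2 0.

Definition is_Leig (R : realType) (A : 'M[R]_2) (l : R) : Prop :=
  exists x : 'cV[R]_2,
    [/\ x != 0, inK x, inK ((A - l%:M) *m x) & (x^T *m (A - l%:M) *m x) 0 0 = 0].

Definition sigmaK (R : realType) (A : 'M[R]_2) : R -> Prop := is_Leig A.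

Definition symmetric2 (R : realType) (A : 'M[R]_2) : Prop := A^T = A.

(* The map x |-> (x2 + x1, x2 - x1) sends the Lorentz cone onto the nonnegative
   quadrant, so the L-eigenvalues of A are the Pareto eigenvalues of the conjugate
   matrix N = [[a, b], [c, d]]: a if c >= 0, d if b >= 0, and the eigenvalues with a
   positive eigenvector.  For J = E12 + E21 the conjugate is diag(1, -1), so N and -N,
   taken for phi(J), both have Pareto spectrum {1, -1}.  If c > 0, then a stays a
   Pareto eigenvalue of N - t N' for small t > 0, where N' is the conjugate of phi(B)
   and B has conjugate 2 E21; since J - t B has spectrum {-1}, this forces a = -1.
   The same holds for b, d and for -N.  On S_2 one has b = c instead, and since
   positive eigenvectors of a symmetric matrix cannot be orthogonal, b = c = 0.  A case
   analysis on the sign of c then leaves only N = diag(1, -1) or N = diag(-1, 1). *)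

From HB Require Import structures.
From mathcomp Require Import all_boot all_order all_algebra.
From mathcomp Require Import reals.
From mathcomp Require Import ring lra.
Set Implicit Arguments.
Unset Strict Implicit.
Unset Printing Implicit Defensive.
Import Order.TTheory GRing.Theory Num.Theory.
Local Open Scope ring_scope.

Section Pareto.
Variable R : realType.
Implicit Types a b c d l : R.

Definition pareto_eig a b c d l : Prop :=
  exists p q : R, [/\ 0 <= p, 0 <= q & 0 < p + q] /\
    [/\ 0 <= (a - l) * p + b * q, 0 <= c * p + (d - l) * q &
        p * ((a - l) * p + b * q) + q * (c * p + (d - l) * q) = 0].

Lemma pareto_eigE a b c d l : pareto_eig a b c d l <->
  [\/ 0 <= c /\ l = a, 0 <= b /\ l = d |
      exists p q, [/\ 0 < p, 0 < q, (a - l) * p + b * q = 0 & c * p + (d - l) * q = 0]].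
Proof.
split.
- move=> [p [q [[hp hq hpq] [hu hv hc]]]].
  have [pu0 qv0] : p * ((a - l) * p + b * q) = 0 /\ q * (c * p + (d - l) * q) = 0.
    by split; nra.
  have [p0|p_gt0] : p = 0 \/ 0 < p by lra.
    have v0 : c * p + (d - l) * q = 0 by nra.
    by apply: Or32; rewrite p0 in hu v0; split; nra.
  have u0 : (a - l) * p + b * q = 0 by nra.
  have [q0|q_gt0] : q = 0 \/ 0 < q by lra.
    by apply: Or31; rewrite q0 in hv u0; split; nra.
  by apply: Or33; exists p, q; split => //; nra.
- case=> [[hc ->]|[hb ->]|[p [q [hp hq hu hv]]]].
  + by exists 1, 0; split; split; lra.
  + by exists 0, 1; split; split; lra.
  + by exists p, q; rewrite hu hv; split; split; lra.
Qed.

Lemma pareto_eig_swap a b c d l : pareto_eig a b c d l <-> pareto_eig d c b a l.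
Proof.
suff swap a' b' c' d' : pareto_eig a' b' c' d' l -> pareto_eig d' c' b' a' l.
  by split; apply: swap.
move=> [p [q [[hp hq hpq] [hu hv hpu]]]].
by exists q, p; split; split; lra.
Qed.

Lemma pareto_eig_diag a d l : pareto_eig a 0 0 d l <-> l = a \/ l = d.
Proof.
rewrite pareto_eigE; split.
- case=> [[_ ->]|[_ ->]|[p [q [hp _ hu _]]]]; [by left|by right|left; nra].
- by case=> ->; [apply: Or31|apply: Or32].
Qed.

Lemma pareto_eig_upper a b d l : b < 0 -> pareto_eig a b 0 d l -> l = a \/ l = d /\ d < a.
Proof.
move=> hb /pareto_eigE[[_ ->]|[b_ge0 _]|[p [q [hp hq hu hv]]]]; [by left|lra|right].
have ld : l = d by nra.
by rewrite ld in hu *; split=> //; nra.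
Qed.

Lemma pareto_eig_lower a c d l : c < 0 -> pareto_eig a 0 c d l -> l = d \/ l = a /\ a < d.
Proof. by move=> hc /pareto_eig_swap; apply: pareto_eig_upper. Qed.

(* Positive eigenvectors for distinct eigenvalues of a symmetric matrix would be
   orthogonal. *)
Lemma pareto_eig_sym_uniq a b d l l' : b < 0 ->
  pareto_eig a b b d l -> pareto_eig a b b d l' -> l = l'.
Proof.
move=> hb /pareto_eigE[[]|[]|[p [q [hp hq hu hv]]]]; try lra.
move=> /pareto_eigE[[]|[]|[p' [q' [hp' hq' hu' hv']]]]; try lra.
have orth : (l' - l) * (p * p' + q * q') =
    p' * ((a - l) * p + b * q) + q' * (b * p + (d - l) * q)
    - p * ((a - l') * p' + b * q') - q * (b * p' + (d - l') * q') by ring.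
rewrite hu hv hu' hv' !mulr0 !subr0 addr0 in orth.
have pos : 0 < p * p' + q * q' by rewrite addr_gt0 ?mulr_gt0.
by move/eqP: orth; rewrite mulf_eq0 (gt_eqF pos) orbF subr_eq0 => /eqP.
Qed.

Lemma pareto_eig1_opp_lower a b c d : 0 < c -> a = -1 ->
  pareto_eig a b c d 1 -> pareto_eig (- a) (- b) (- c) (- d) 1 -> False.
Proof.
move=> hc -> /pareto_eigE hN /pareto_eigE hNopp.
have [b_le0 d_le] : b <= 0 /\ d <= -1.
  by case: hNopp => [[]|[]|[p [q [hp hq hu hv]]]]; [lra|lra|split; nra].
by case: hN => [[]|[]|[p [q [hp hq hu hv]]]]; nra.
Qed.

Definition spec_pm1 a b c d : Prop := forall l, pareto_eig a b c d l <-> l = 1 \/ l = -1.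

Lemma spec_pm1_eig1 a b c d : spec_pm1 a b c d -> pareto_eig a b c d 1.
Proof. by move=> h; apply/h; left. Qed.

Lemma spec_pm1_eigN1 a b c d : spec_pm1 a b c d -> pareto_eig a b c d (-1).
Proof. by move=> h; apply/h; right. Qed.

Lemma spec_pm1_not_single a b c d x :
  spec_pm1 a b c d -> ~ (forall l, pareto_eig a b c d l -> l = x).
Proof.
move=> h hx; have := hx _ (spec_pm1_eig1 h); have := hx _ (spec_pm1_eigN1 h); lra.
Qed.

Lemma spec_pm1_upper a b d :
  spec_pm1 a b 0 d -> spec_pm1 (- a) (- b) 0 (- d) ->
  (0 < b -> d = -1) -> (b < 0 -> d = 1) ->
  [/\ a = 1, b = 0 & d = -1] \/ [/\ a = -1, b = 0 & d = 1].
Proof.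
move=> hN hNopp hbpos hbneg.
have ha : a = 1 \/ a = -1 by apply/hN/pareto_eigE; apply: Or31.
case: (ltgtP b 0) => hb.
- case: (spec_pm1_not_single (x := a) hN) => l /(pareto_eig_upper hb).
  by rewrite (hbneg hb); case: ha; lra.
- have hb' : - b < 0 by lra.
  case: (spec_pm1_not_single (x := - a) hNopp) => l /(pareto_eig_upper hb').
  by rewrite (hbpos hb); case: ha; lra.
- subst b.
  move: (spec_pm1_eig1 hN) (spec_pm1_eigN1 hN); rewrite !pareto_eig_diag.
  by case: ha => ->; [left|right]; split => //; lra.
Qed.

Lemma spec_pm1_diag a b c d :
  spec_pm1 a b c d -> spec_pm1 (- a) (- b) (- c) (- d) ->
  (0 < c -> a = -1) -> (c < 0 -> a = 1) -> (0 < b -> d = -1) -> (b < 0 -> d = 1) ->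
  [/\ a = 1, b = 0, c = 0 & d = -1] \/ [/\ a = -1, b = 0, c = 0 & d = 1].
Proof.
move=> hN hNopp hcpos hcneg hbpos hbneg.
case: (ltgtP c 0) => hc.
- have hc' : 0 < - c by lra.
  have ha : - a = -1 by rewrite hcneg.
  have := pareto_eig1_opp_lower hc' ha (spec_pm1_eig1 hNopp).
  by rewrite !opprK => /(_ (spec_pm1_eig1 hN)).
- by case: (pareto_eig1_opp_lower hc (hcpos hc) (spec_pm1_eig1 hN) (spec_pm1_eig1 hNopp)).
- subst c; rewrite oppr0 in hNopp.
  by case: (spec_pm1_upper hN hNopp hbpos hbneg) => -[-> -> ->]; [left|right].
Qed.

Lemma small_pos_multiplier c y u : 0 < c -> exists2 t : R, 0 < t & t * y <= c /\ t * u < 1.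
Proof.
move=> hc; set K := 1 + `|y| + `|u|.
have hK : 0 < K by rewrite /K; have := normr_ge0 y; have := normr_ge0 u; lra.
have hc1 : 0 < 1 + c by lra.
exists (c / (1 + c) / K); first by rewrite !divr_gt0.
set t := c / (1 + c) / K.
have ht : 0 < t by rewrite !divr_gt0.
have tK : t * K * (1 + c) = c by rewrite /t divfK ?gt_eqF // divfK ?gt_eqF.
have ty : t * y <= t * K.
  by rewrite ler_pM2l // /K; have := ler_norm y; have := normr_ge0 u; lra.
have tu : t * u <= t * K.
  by rewrite ler_pM2l // /K; have := ler_norm u; have := normr_ge0 y; lra.
have := mulr_gt0 ht hK; split; nra.
Qed.

Lemma spec_pm1_perturb a b c d y11 y12 y21 y22 :
  spec_pm1 a b c d ->
  (forall t l, 0 < t ->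
     pareto_eig (a - t * y11) (b - t * y12) (c - t * y21) (d - t * y22) l -> l = -1) ->
  (0 < c -> a = -1) /\ (0 < b -> d = -1).
Proof.
move=> hN hpert; split=> [hc|hb].
- have ha : a = 1 \/ a = -1 by apply/hN/pareto_eigE; apply: Or31; split; lra.
  have [t ht [hy hu]] := small_pos_multiplier y21 y11 hc.
  have : a - t * y11 = -1.
    by apply: (hpert t) => //; apply/pareto_eigE; apply: Or31; split; lra.
  by case: ha; lra.
- have hd : d = 1 \/ d = -1 by apply/hN/pareto_eigE; apply: Or32; split; lra.
  have [t ht [hy hu]] := small_pos_multiplier y12 y22 hb.
  have : d - t * y22 = -1.
    by apply: (hpert t) => //; apply/pareto_eigE; apply: Or32; split; lra.
  by case: hd; lra.
Qed.

Lemma spec_pm1_sym a b d : spec_pm1 a b b d -> spec_pm1 (- a) (- b) (- b) (- d) -> b = 0.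
Proof.
have no_neg x y w : spec_pm1 x y y w -> ~ y < 0.
  move=> h hy; have := pareto_eig_sym_uniq hy (spec_pm1_eig1 h) (spec_pm1_eigN1 h); lra.
move=> hN hNopp; case: (ltgtP b 0) => // hb; exfalso.
- exact: no_neg hN hb.
- by apply: no_neg hNopp _; lra.
Qed.
End Pareto.

Section Lorentz.
Variable R : realType.
Implicit Types (M : 'M[R]_2) (l : R).

Lemma ord2P (i : 'I_2) : i = i1 \/ i = i2.
Proof. by case: i => [[|[|//]]] ?; [left|right]; apply: val_inj. Qed.

Lemma lift0_i2 : lift ord0 (ord0 : 'I_1) = i2.
Proof. exact: val_inj. Qed.

Lemma mulmx_col2 M (x : 'cV[R]_2) i : (M *m x) i 0 = M i i1 * x i1 0 + M i i2 * x i2 0.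
Proof. by rewrite mxE !big_ord_recl big_ord0 addr0 lift0_i2. Qed.

Lemma quad_form2 M (x : 'cV[R]_2) :
  (x^T *m M *m x) 0 0 = x i1 0 * (M *m x) i1 0 + x i2 0 * (M *m x) i2 0.
Proof.
by rewrite -mulmxA mxE !big_ord_recl big_ord0 addr0 lift0_i2 !mxE.
Qed.

Lemma submx_scalar2 M l : [/\ (M - l%:M) i1 i1 = M i1 i1 - l, (M - l%:M) i1 i2 = M i1 i2,
  (M - l%:M) i2 i1 = M i2 i1 & (M - l%:M) i2 i2 = M i2 i2 - l].
Proof. by rewrite !mxE /= ?mulr1n ?mulr0n ?subr0. Qed.

(* [rotij M] is the (i, j) entry of S M S^-1 for S = [[1, 1], [-1, 1]], which maps the
   Lorentz cone onto the nonnegative quadrant. *)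
Definition rot11 M := (M i1 i1 + M i1 i2 + M i2 i1 + M i2 i2) / 2.
Definition rot12 M := (M i1 i2 + M i2 i2 - M i1 i1 - M i2 i1) / 2.
Definition rot21 M := (M i2 i1 + M i2 i2 - M i1 i1 - M i1 i2) / 2.
Definition rot22 M := (M i1 i1 - M i1 i2 - M i2 i1 + M i2 i2) / 2.

Lemma is_Leig_pareto M l :
  is_Leig M l <-> pareto_eig (rot11 M) (rot12 M) (rot21 M) (rot22 M) l.
Proof.
have [e11 e12 e21 e22] := submx_scalar2 M l.
rewrite /is_Leig /inK /rot11 /rot12 /rot21 /rot22; split.
- move=> [x [x_neq0 hx]]; rewrite quad_form2 !mulmx_col2 e11 e12 e21 e22.
  move: hx x_neq0; set x1 := x i1 0; set x2 := x i2 0 => hx x_neq0.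
  move: hx; rewrite !ler_norml => /andP[hx1 hx2] /andP[hy1 hy2] hq.
  have x2_gt0 : 0 < x2.
    have x2_ge0 : 0 <= x2 by lra.
    rewrite lt_def x2_ge0 andbT.
    apply: contraNneq x_neq0 => x2_0; apply/eqP/matrixP => i j.
    by rewrite (ord1 j) !mxE; case: (ord2P i) => ->; rewrite -/x1 -/x2; lra.
  exists (x2 + x1), (x2 - x1); split; split; lra.
- move=> [p [q [[hp hq hpq] [hu hv hc]]]].
  exists (\col_i (if i == i1 then p - q else p + q)).
  rewrite quad_form2 !mulmx_col2 e11 e12 e21 e22 !mxE /=.
  split.
  + by apply/eqP => /matrixP /(_ i2 0); rewrite !mxE /=; lra.
  + by rewrite ler_norml; apply/andP; split; lra.
  + by rewrite ler_norml; apply/andP; split; lra.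
  + lra.
Qed.

Lemma rot_linear (k : R) M N :
  [/\ rot11 (k *: M + N) = k * rot11 M + rot11 N, rot12 (k *: M + N) = k * rot12 M + rot12 N,
      rot21 (k *: M + N) = k * rot21 M + rot21 N & rot22 (k *: M + N) = k * rot22 M + rot22 N].
Proof. by rewrite /rot11 /rot12 /rot21 /rot22 !mxE; split; lra. Qed.

Lemma rot_opp M :
  [/\ rot11 (- M) = - rot11 M, rot12 (- M) = - rot12 M,
      rot21 (- M) = - rot21 M & rot22 (- M) = - rot22 M].
Proof. by rewrite /rot11 /rot12 /rot21 /rot22 !mxE; split; lra. Qed.

Lemma rot_inj M N : rot11 M = rot11 N -> rot12 M = rot12 N ->
  rot21 M = rot21 N -> rot22 M = rot22 N -> M = N.
Proof.
rewrite /rot11 /rot12 /rot21 /rot22 => h11 h12 h21 h22; apply/matrixP => i j.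
by case: (ord2P i) => ->; case: (ord2P j) => ->; lra.
Qed.

Lemma rot_sym M : symmetric2 M -> rot12 M = rot21 M.
Proof.
by move=> /(congr1 (fun N : 'M[R]_2 => N i2 i1)); rewrite mxE /rot12 /rot21 => ->; lra.
Qed.

Definition Jmx : 'M[R]_2 := E R i1 i2 + E R i2 i1.
Definition Bmx_lower : 'M[R]_2 := \matrix_(i, j) (if i == i1 then -1 else 1).
Definition Bmx_upper : 'M[R]_2 := \matrix_(i, j) (if j == i1 then -1 else 1).

Lemma rot_Jmx : [/\ rot11 Jmx = 1, rot12 Jmx = 0, rot21 Jmx = 0 & rot22 Jmx = -1].
Proof. by rewrite /rot11 /rot12 /rot21 /rot22 /Jmx /E !mxE /=; split; lra. Qed.

Lemma rot_Bmx_lower :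
  [/\ rot11 Bmx_lower = 0, rot12 Bmx_lower = 0, rot21 Bmx_lower = 2 & rot22 Bmx_lower = 0].
Proof. by rewrite /rot11 /rot12 /rot21 /rot22 /Bmx_lower !mxE /=; split; lra. Qed.

Lemma rot_Bmx_upper :
  [/\ rot11 Bmx_upper = 0, rot12 Bmx_upper = 2, rot21 Bmx_upper = 0 & rot22 Bmx_upper = 0].
Proof. by rewrite /rot11 /rot12 /rot21 /rot22 /Bmx_upper !mxE /=; split; lra. Qed.

End Lorentz.

Section Preserver.
Variable R : realType.
Variables (W : 'M[R]_2 -> Prop) (phi : 'M[R]_2 -> 'M[R]_2).
Hypothesis W0 : W 0.
Hypothesis W_lin : forall (k : R) A B, W A -> W B -> W (k *: A + B).
Hypothesis WJ : W (Jmx R).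
Hypothesis phi_lin : forall (k : R) A B, W A -> W B -> phi (k *: A + B) = k *: phi A + phi B.
Hypothesis phi_spec : forall A, W A -> sigmaK (phi A) = sigmaK A.

Lemma W_opp A : W A -> W (- A).
Proof. by move=> hA; have := W_lin (-1) hA W0; rewrite scaleN1r addr0. Qed.

Lemma phi0 : phi 0 = 0.
Proof.
have := phi_lin 1 W0 W0; rewrite !scale1r addr0 => h.
by apply: (addrI (phi 0)); rewrite addr0 -h.
Qed.

Lemma phi_opp A : W A -> phi (- A) = - phi A.
Proof. by move=> hA; have := phi_lin (-1) hA W0; rewrite !scaleN1r !addr0 phi0 addr0. Qed.

Lemma phi_Leig A l : W A -> is_Leig (phi A) l <-> is_Leig A l.
Proof. by move=> /phi_spec; rewrite /sigmaK => ->. Qed.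

Lemma pareto_eig_phi_comb (k : R) A B l : W A -> W B ->
  pareto_eig (k * rot11 (phi A) + rot11 (phi B)) (k * rot12 (phi A) + rot12 (phi B))
             (k * rot21 (phi A) + rot21 (phi B)) (k * rot22 (phi A) + rot22 (phi B)) l <->
  pareto_eig (k * rot11 A + rot11 B) (k * rot12 A + rot12 B)
             (k * rot21 A + rot21 B) (k * rot22 A + rot22 B) l.
Proof.
move=> hA hB; have [<- <- <- <-] := rot_linear k (phi A) (phi B).
have [<- <- <- <-] := rot_linear k A B.
by rewrite -!is_Leig_pareto -phi_lin // phi_Leig //; apply: W_lin.
Qed.

Local Notation J := (Jmx R).
Local Notation P := (phi J).

Lemma spec_pm1_phiJ : spec_pm1 (rot11 P) (rot12 P) (rot21 P) (rot22 P).
Proof.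
move=> l; rewrite -is_Leig_pareto phi_Leig // is_Leig_pareto.
by have [-> -> -> ->] := rot_Jmx R; exact: pareto_eig_diag.
Qed.

Lemma spec_pm1_phiJ_opp : spec_pm1 (- rot11 P) (- rot12 P) (- rot21 P) (- rot22 P).
Proof.
move=> l; have [<- <- <- <-] := rot_opp P.
rewrite -is_Leig_pareto -phi_opp // phi_Leig; last exact: W_opp.
rewrite is_Leig_pareto.
have [-> -> -> ->] := rot_opp J; have [-> -> -> ->] := rot_Jmx R.
by rewrite !oppr0 opprK pareto_eig_diag; split; case; auto.
Qed.

Lemma phiJ_pm_of_signs :
  (0 < rot21 P -> rot11 P = -1) -> (rot21 P < 0 -> rot11 P = 1) ->
  (0 < rot12 P -> rot22 P = -1) -> (rot12 P < 0 -> rot22 P = 1) ->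
  P = J \/ P = - J.
Proof.
move=> c_pos c_neg b_pos b_neg.
have [J11 J12 J21 J22] := rot_Jmx R; have [N11 N12 N21 N22] := rot_opp J.
have [[e11 e12 e21 e22]|[e11 e12 e21 e22]] :=
  spec_pm1_diag spec_pm1_phiJ spec_pm1_phiJ_opp c_pos c_neg b_pos b_neg.
- by left; apply: rot_inj; lra.
- by right; apply: rot_inj; lra.
Qed.

Lemma phiJ_pm_sym : symmetric2 P -> P = J \/ P = - J.
Proof.
move=> /rot_sym b_eq_c.
have b0 : rot12 P = 0.
  move: spec_pm1_phiJ spec_pm1_phiJ_opp; rewrite -b_eq_c; exact: spec_pm1_sym.
by apply: phiJ_pm_of_signs; rewrite -?b_eq_c b0 ltxx.
Qed.

Lemma phiJ_offdiag_gt0 : W (Bmx_lower R) ->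
  (0 < rot21 P -> rot11 P = -1) /\ (0 < rot12 P -> rot22 P = -1).
Proof.
move=> W_lower; pose Y := phi (Bmx_lower R).
apply: (spec_pm1_perturb (y11 := rot11 Y) (y12 := rot12 Y) (y21 := rot21 Y) (y22 := rot22 Y)
  spec_pm1_phiJ) => t l t_gt0.
rewrite ![_ - _]addrC -!mulNr pareto_eig_phi_comb //.
have [-> -> -> ->] := rot_Bmx_lower R; have [-> -> -> ->] := rot_Jmx R.
rewrite !mulr0 !add0r addr0 => /pareto_eig_lower.
by case; lra.
Qed.

Lemma phiJ_offdiag_lt0 : W (Bmx_upper R) ->
  (rot21 P < 0 -> rot11 P = 1) /\ (rot12 P < 0 -> rot22 P = 1).
Proof.
move=> W_upper; pose Y := phi (Bmx_upper R).
have [c_neg b_neg] : (0 < - rot21 P -> - rot11 P = -1) /\ (0 < - rot12 P -> - rot22 P = -1).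
  apply: (spec_pm1_perturb (y11 := rot11 Y) (y12 := rot12 Y) (y21 := rot21 Y) (y22 := rot22 Y)
    spec_pm1_phiJ_opp) => t l t_gt0.
  have [<- <- <- <-] := rot_opp P.
  rewrite ![_ - _]addrC -!mulNr -phi_opp // pareto_eig_phi_comb //; last exact: W_opp.
  have [-> -> -> ->] := rot_Bmx_upper R; have [-> -> -> ->] := rot_opp J.
  have [-> -> -> ->] := rot_Jmx R.
  rewrite !mulr0 !add0r !oppr0 addr0 opprK => /pareto_eig_upper.
  by case; lra.
by split=> hs; [apply/oppr_inj/c_neg | apply/oppr_inj/b_neg]; lra.
Qed.

Lemma phiJ_pm : W (Bmx_lower R) -> W (Bmx_upper R) -> P = J \/ P = - J.
Proof.
move=> /phiJ_offdiag_gt0[c_pos b_pos] /phiJ_offdiag_lt0[c_neg b_neg].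
exact: phiJ_pm_of_signs.
Qed.
End Preserver.

Theorem lemma4p8 (R : realType) :
  (forall phi : 'M[R]_2 -> 'M[R]_2,
     (forall (a : R) (A B : 'M[R]_2), phi (a *: A + B) = a *: phi A + phi B) ->
     (forall A : 'M[R]_2, sigmaK (phi A) = sigmaK A) ->
     phi (E R i1 i2 + E R i2 i1) = E R i1 i2 + E R i2 i1 \/
     phi (E R i1 i2 + E R i2 i1) = - (E R i1 i2 + E R i2 i1))
  /\
  (forall phi : 'M[R]_2 -> 'M[R]_2,
     (forall A : 'M[R]_2, symmetric2 A -> symmetric2 (phi A)) ->
     (forall (a : R) (A B : 'M[R]_2), symmetric2 A -> symmetric2 B ->
        phi (a *: A + B) = a *: phi A + phi B) ->
     (forall A : 'M[R]_2, symmetric2 A -> sigmaK (phi A) = sigmaK A) ->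
     phi (E R i1 i2 + E R i2 i1) = E R i1 i2 + E R i2 i1 \/
     phi (E R i1 i2 + E R i2 i1) = - (E R i1 i2 + E R i2 i1)).
Proof.
have symJ : symmetric2 (Jmx R).
  by rewrite /symmetric2 /Jmx /E linearD /= !trmx_delta addrC.
have sym_lin (k : R) (A B : 'M[R]_2) :
    symmetric2 A -> symmetric2 B -> symmetric2 (k *: A + B).
  by rewrite /symmetric2 linearD linearZ /= => -> ->.
split.
- move=> phi phi_lin phi_spec.
  by apply: (@phiJ_pm R (fun _ => True)) => // k A B _ _; apply: phi_lin.
- move=> phi phi_sym phi_lin phi_spec.
  by apply: (@phiJ_pm_sym R (@symmetric2 R)) => //; [exact: trmx0 | exact: phi_sym].
Qed.
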